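(* The sequence $((x_n, y_n))_{n \geq 0}$ of coordinates of the points visited by the Hilbert curve is $4$-regular; more precisely, for all $n \geq 0$ we have $(x_n, y_n) = v\,\gamma((n)_4)\,w$, where $(n)_4$ is the base-$4$ representation of $n$, $\gamma$ is extended to words multiplicatively, and $$v = \begin{bmatrix} 0&0&0&1&0\\ 0&0&1&1&0 \end{bmatrix},\quad w = \begin{bmatrix}1\\0\\0\\0\\0\end{bmatrix},$$ $$\gamma(0)=\begin{bmatrix} 0&0&0&0&-4\\ 1&0&-1&-1&4\\ 0&0&1&0&0\\ 0&0&0&1&0\\ 0&1&1&1&1\end{bmatrix},\quad \gamma(1)=\begin{bmatrix} 0&0&0&0&-4\\ 0&0&0&-1&0\\ 1&-2&-3&-2&4\\ 0&2&3&3&0\\ 0&1&1&1&1\end{bmatrix},$$ $$\gamma(2)=\begin{bmatrix} 0&0&0&0&-4\\ 0&-2&-2&-3&0\\ 0&0&-1&0&0\\ 1&2&3&3&4\\ 0&1&1&1&1\end{bmatrix},\quad \gamma(3)=\begin{bmatrix} 0&0&0&0&-4\\ 1&-3&-2&-2&1\\ -1&2&1&2&-4\\ 1&1&1&0&7\\ 0&1&1&1&1\end{bmatrix}.$$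
   Context: The Hilbert curve is encoded as an infinite word $\mathbf{HC} = h_0h_1h_2\cdots$ over $\{\mathtt{U},\mathtt{D},\mathtt{R},\mathtt{L}\}$ (up, down, right, left): it is the unique infinite word having every $A_n$ as a prefix, where $A_0=\epsilon$ and, with $t_D$ the coding $\mathtt{U}\mapsto\mathtt{R},\mathtt{D}\mapsto\mathtt{L},\mathtt{R}\mapsto\mathtt{U},\mathtt{L}\mapsto\mathtt{D}$ (flip about the main diagonal) and $t_H$ the coding $\mathtt{U}\mapsto\mathtt{D},\mathtt{D}\mapsto\mathtt{U},\mathtt{R}\mapsto\mathtt{L},\mathtt{L}\mapsto\mathtt{R}$ ($180^\circ$ rotation), $A_{2n+1}=A_{2n}\,\mathtt{U}\,t_D(A_{2n})\,\mathtt{R}\,t_D(A_{2n})\,\mathtt{D}\,t_H(A_{2n})$ and $A_{2n+2}=A_{2n+1}\,\mathtt{R}\,t_D(A_{2n+1})\,\mathtt{U}\,t_D(A_{2n+1})\,\mathtt{L}\,t_H(A_{2n+1})$. Starting at $(x_0,y_0)=(0,0)$, one sets $(x_{n+1},y_{n+1})=(x_n,y_n)+(1,0),(-1,0),(0,1),(0,-1)$ according as $h_n=\mathtt{R},\mathtt{L},\mathtt{U},\mathtt{D}$. A sequence is $k$-regular if some finite subset of its $k$-kernel $\{(a_{k^e n+i})_{n\ge0}: e\ge0,\ 0\le i<k^e\}$ linearly spans every element of the kernel; equivalently it admits a linear representation $a_n = v\gamma((n)_k)w$. *)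

From mathcomp Require Import all_boot all_order all_algebra.
Set Implicit Arguments. Unset Strict Implicit. Unset Printing Implicit Defensive.
Import GRing.Theory Num.Theory.
Local Open Scope ring_scope.

Inductive dir := U | D | R | L.

Definition tD (a : dir) : dir :=
  match a with U => R | D => L | R => U | L => D end.
Definition tH (a : dir) : dir :=
  match a with U => D | D => U | R => L | L => R end.

Fixpoint Aw (n : nat) : seq dir :=
  match n with
  | 0 => [::]
  | n'.+1 =>
      let a := Aw n' in
      if ~~ odd n' then
        a ++ U :: map tD a ++ R :: map tD a ++ D :: map tH a
      else
        a ++ R :: map tD a ++ U :: map tD a ++ L :: map tH a
  end.

Definition step (a : dir) (p : int * int) : int * int :=
  match a with
  | R => (p.1 + 1, p.2)
  | L => (p.1 - 1, p.2)
  | U => (p.1, p.2 + 1)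
  | D => (p.1, p.2 - 1)
  end.

Fixpoint pos (h : nat -> dir) (n : nat) : int * int :=
  match n with
  | 0 => (0, 0)
  | n'.+1 => step (h n') (pos h n')
  end.

Definition coordmx (p : int * int) : 'M[int]_(2, 1) :=
  \matrix_(i < 2, j < 1) (if i == 0 :> nat then p.1 else p.2).

(* Base-4 representation, most significant digit first; (0)_4 is empty. *)
Fixpoint base4_aux (k n : nat) : seq nat :=
  match k with
  | 0 => [::]
  | k'.+1 => if n == 0%N then [::] else rcons (base4_aux k' (n %/ 4)%N) (n %% 4)%N
  end.
Definition base4 (n : nat) : seq nat := base4_aux n n.

Definition mx_of (m n : nat) (s : seq (seq int)) : 'M[int]_(m, n) :=
  \matrix_(i < m, j < n) nth 0 (nth [::] s i) j.

Definition vH : 'M[int]_(2, 5) :=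
  mx_of 2 5 [:: [:: 0; 0; 0; 1; 0]; [:: 0; 0; 1; 1; 0]].
Definition wH : 'M[int]_(5, 1) :=
  mx_of 5 1 [:: [:: 1]; [:: 0]; [:: 0]; [:: 0]; [:: 0]].

Definition gamma0 : 'M[int]_5 := mx_of 5 5
  [:: [:: 0; 0; 0; 0; -4];
      [:: 1; 0; -1; -1; 4];
      [:: 0; 0; 1; 0; 0];
      [:: 0; 0; 0; 1; 0];
      [:: 0; 1; 1; 1; 1]].
Definition gamma1 : 'M[int]_5 := mx_of 5 5
  [:: [:: 0; 0; 0; 0; -4];
      [:: 0; 0; 0; -1; 0];
      [:: 1; -2; -3; -2; 4];
      [:: 0; 2; 3; 3; 0];
      [:: 0; 1; 1; 1; 1]].
Definition gamma2 : 'M[int]_5 := mx_of 5 5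
  [:: [:: 0; 0; 0; 0; -4];
      [:: 0; -2; -2; -3; 0];
      [:: 0; 0; -1; 0; 0];
      [:: 1; 2; 3; 3; 4];
      [:: 0; 1; 1; 1; 1]].
Definition gamma3 : 'M[int]_5 := mx_of 5 5
  [:: [:: 0; 0; 0; 0; -4];
      [:: 1; -3; -2; -2; 1];
      [:: -1; 2; 1; 2; -4];
      [:: 1; 1; 1; 0; 7];
      [:: 0; 1; 1; 1; 1]].

(* gamma on digits 0..3 (other values never occur in base4 outputs) *)
Definition gammaH (d : nat) : 'M[int]_5 :=
  match d with 0 => gamma0 | 1 => gamma1 | 2 => gamma2 | _ => gamma3 end.

Definition gamma_word (s : seq nat) : 'M[int]_5 :=
  foldr (fun d M => gammaH d *m M) 1%:M s.

(* Split n < 4^(k+1) as n = q 4^k + r with r < 4^k: the word A_(k+1) consists of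
   four copies of A_k joined by single steps, the q-th one moved by an isometry
   that depends only on q and on the parity of k (hilbert_block), so the point
   reached after n steps is that isometry applied to the point reached after r
   steps in A_k.  Reading the digits of n from the most significant one, the
   vector gamma(d_(k-1) ... d_0) w is therefore (state_vec) an affine encoding of
   that point together with a triple (a, b, e) depending only on k, from which
   2^k and the parity of k are recovered linearly (scale_spec); multiplying by
   gamma(q) performs exactly the isometry of the q-th block.  Leading zeros do
   not matter because v gamma(0) = v. *)

From mathcomp Require Import all_boot all_order all_algebra.
From mathcomp Require Import zify.
Import GRing.Theory Num.Theory.
Local Open Scope ring_scope.

Lemma pair_addE (U V : nmodType) (u u' : U) (v v' : V) :
  (u, v) + (u', v') = (u + u', v + v').
Proof. by []. Qed.

Lemma pair_oppE (U V : zmodType) (u : U) (v : V) : - (u, v) = (- u, - v).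
Proof. by []. Qed.

Definition dir_vec (a : dir) : int * int :=
  match a with R => (1, 0) | L => (-1, 0) | U => (0, 1) | D => (0, -1) end.

Definition disp (w : seq dir) : int * int := \sum_(a <- w) dir_vec a.

Lemma disp_cat (w1 w2 : seq dir) : disp (w1 ++ w2) = disp w1 + disp w2.
Proof. exact: big_cat. Qed.

Lemma disp_cons (a : dir) (w : seq dir) : disp (a :: w) = dir_vec a + disp w.
Proof. exact: big_cons. Qed.

Lemma disp_map_tD (w : seq dir) : disp (map tD w) = ((disp w).2, (disp w).1).
Proof.
rewrite /disp big_map; elim: w => [|a w]; rewrite ?big_nil ?big_cons //= => ->.
by case: a.
Qed.

Lemma disp_map_tH (w : seq dir) : disp (map tH w) = - disp w.
Proof.
rewrite /disp big_map; elim: w => [|a w]; rewrite ?big_nil ?big_cons //= => ->.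
by rewrite opprD; case: a.
Qed.

Lemma step_dir_vec (a : dir) (p : int * int) : step a p = p + dir_vec a.
Proof. by case: a; case: p => x y; rewrite pair_addE ?addr0. Qed.

Lemma pos_disp (h : nat -> dir) (n : nat) :
  pos h n = disp [seq h i | i <- iota 0 n].
Proof.
elim: n => [|n IH]; first by rewrite /disp big_nil.
by rewrite -[in RHS]addn1 iotaD map_cat disp_cat -IH /disp big_seq1 -step_dir_vec.
Qed.

Lemma take_blocks (T : Type) (w0 w1 w2 w3 : seq T) (c1 c2 c3 : T) (m q r : nat) :
  size w0 = m -> size w1 = m -> size w2 = m -> (q < 4)%N -> (r <= m)%N ->
  take (q * m.+1 + r) (w0 ++ c1 :: w1 ++ c2 :: w2 ++ c3 :: w3) =
  match q with
  | 0 => take r w0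
  | 1 => w0 ++ c1 :: take r w1
  | 2 => w0 ++ c1 :: w1 ++ c2 :: take r w2
  | _ => w0 ++ c1 :: w1 ++ c2 :: w2 ++ c3 :: take r w3
  end.
Proof.
move=> sz0 sz1 sz2 q_lt r_le; have take_catr (s s' : seq T) k :
  take (size s + k) (s ++ s') = s ++ take k s'.
  by rewrite take_cat ltnNge leq_addr addKn.
case: q q_lt => [|[|[|[|q]]]] // _; first by rewrite takel_cat ?sz0.
- rewrite (_ : _ + r = size w0 + r.+1)%N; last by lia.
  by rewrite take_catr /= takel_cat ?sz1.
- rewrite (_ : _ + r = size w0 + (size w1 + r.+1).+1)%N; last by lia.
  by rewrite take_catr /= take_catr /= takel_cat ?sz2.
- rewrite (_ : _ + r = size w0 + (size w1 + (size w2 + r.+1).+1).+1)%N; last by lia.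
  by rewrite take_catr /= take_catr /= take_catr.
Qed.

Lemma AwS (k : nat) : Aw k.+1 =
  if odd k then
    Aw k ++ R :: map tD (Aw k) ++ U :: map tD (Aw k) ++ L :: map tH (Aw k)
  else
    Aw k ++ U :: map tD (Aw k) ++ R :: map tD (Aw k) ++ D :: map tH (Aw k).
Proof. by rewrite /=; case: (odd k). Qed.

Lemma size_Aw (k : nat) : (size (Aw k)).+1 = (4 ^ k)%N.
Proof.
elim: k => [|k IH] //; rewrite AwS expnS -IH.
by case: (odd k); do !rewrite /= size_cat; rewrite /= !size_map; lia.
Qed.

Lemma disp_Aw (k : nat) :
  disp (Aw k) = if odd k then (Posz (2 ^ k) - 1, 0) else (0, Posz (2 ^ k) - 1).
Proof.
elim: k => [|k IH]; first by rewrite /disp big_nil.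
rewrite AwS /= expnS PoszM.
case: (odd k) IH => /= IH;
  rewrite !(disp_cat, disp_cons, disp_map_tD, disp_map_tH) IH /=
    !(pair_addE, pair_oppE) /=; congr pair; lia.
Qed.

Definition hilbert_block (k q : nat) (p : int * int) : int * int :=
  let c := Posz (2 ^ k) in
  match q, odd k with
  | 0, _ => p
  | 1, false => (0, c) + (p.2, p.1)
  | 1, true => (c, 0) + (p.2, p.1)
  | 2, _ => (c, c) + (p.2, p.1)
  | _, false => (2 * c - 1, c - 1) - p
  | _, true => (c - 1, 2 * c - 1) - p
  end.

Lemma disp_take_AwS (k q r : nat) : (q < 4)%N -> (r < 4 ^ k)%N ->
  disp (take (q * 4 ^ k + r) (Aw k.+1)) = hilbert_block k q (disp (take r (Aw k))).
Proof.
rewrite -size_Aw ltnS => q_lt r_le.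
have sz_tD := size_map tD (Aw k).
rewrite AwS /hilbert_block; case: (odd k) (disp_Aw k) => end_Aw;
  rewrite take_blocks // -!map_take; case: q q_lt => [|[|[|[|q]]]] // _;
  rewrite ?(disp_cat, disp_cons, disp_map_tD, disp_map_tH) ?end_Aw;
  case: (disp (take r (Aw k))) => x y; rewrite /= !(pair_addE, pair_oppE) /=;
  congr pair; lia.
Qed.

Definition state_vec (s : int * int * int) (p : int * int) : 'cV[int]_5 :=
  \col_(i < 5) nth 0 [:: s.1.1; s.1.2 - p.2; p.2 - p.1; p.1; s.2] i.

Fixpoint scale (k : nat) : int * int * int :=
  match k with
  | 0 => (1, 0, 0)
  | k'.+1 => let: (a, b, e) := scale k' in (-4 * e, a + 4 * e, b + e)
  end.

Lemma scale_spec (k : nat) : let: (a, b, e) := scale k in let c := Posz (2 ^ k) in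
  if odd k then [/\ 2 * b = c, 3 * e = b - 1 & a = -4 * e]
  else [/\ b = 0, 3 * e = c - 1 & a = c - 4 * e].
Proof.
elim: k => [|k IH] /=; first by rewrite expn0.
rewrite expnS PoszM; case: (scale k) IH => [[a b] e].
by case: (odd k) => /= -[]; move: (Posz (2 ^ k)) => c *; split; lia.
Qed.

Lemma gammaH_state_vec (k q : nat) (p : int * int) :
  gammaH q *m state_vec (scale k) p = state_vec (scale k.+1) (hilbert_block k q p).
Proof.
have := scale_spec k; rewrite /= /hilbert_block.
case: (scale k) => [[a b] e]; case: p => x y; move: (Posz (2 ^ k)) => c.
case: (odd k) => -[b_eq e_eq a_eq]; case: q => [|[|[|q]]];
  apply/matrixP => i j; rewrite !mxE !big_ord_recr big_ord0 /= !mxE /=;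
  case: i => [[|[|[|[|[|i]]]]] lt_i] //=; lia.
Qed.

Lemma vH_state_vec (s : int * int * int) (p : int * int) :
  vH *m state_vec s p = coordmx p.
Proof.
apply/matrixP => i j; rewrite !mxE !big_ord_recr big_ord0 /= !mxE /=.
by case: i => [[|[|i]] lt_i] //=; lia.
Qed.

Lemma wH_state_vec : wH = state_vec (scale 0) 0.
Proof.
apply/matrixP => i j; rewrite !mxE /= ord1.
by case: i => [[|[|[|[|[|i]]]]] lt_i].
Qed.

Lemma vH_gamma0 : vH *m gamma0 = vH.
Proof.
apply/matrixP => i j; rewrite !mxE !big_ord_recr big_ord0 /= !mxE /=.
by case: i => [[|[|i]] lt_i] //=; case: j => [[|[|[|[|[|j]]]]] lt_j].
Qed.

Lemma gamma_word_rcons (s : seq nat) (d : nat) :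
  gamma_word (rcons s d) = gamma_word s *m gammaH d.
Proof.
elim: s => [|c s IH] /=; first by rewrite mulmx1 mul1mx.
by rewrite IH mulmxA.
Qed.

Fixpoint digits4 (k N : nat) : seq nat :=
  if k is k'.+1 then rcons (digits4 k' (N %/ 4)%N) (N %% 4)%N else [::].

Lemma digits4_modn (k N : nat) : digits4 k N = digits4 k (N %% 4 ^ k)%N.
Proof.
elim: k N => [|k IH] N //=.
rewrite IH [in RHS]IH modn_dvdm ?expnS ?dvdn_mulr //.
by rewrite !modn_divl mulnC modn_mod.
Qed.

Lemma digits4S (k N : nat) : digits4 k.+1 N = (N %/ 4 ^ k %% 4)%N :: digits4 k N.
Proof.
elim: k N => [|k IH] N; first by rewrite expn0 divn1.
by rewrite -[LHS]/(rcons (digits4 k.+1 (N %/ 4)) (N %% 4))%N IH expnS divnMA.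
Qed.

Lemma digits4_block (k q r : nat) : (q < 4)%N -> (r < 4 ^ k)%N ->
  digits4 k.+1 (q * 4 ^ k + r) = q :: digits4 k r.
Proof.
move=> q_lt r_lt; have pos4k : (0 < 4 ^ k)%N by rewrite expn_gt0.
rewrite digits4S divnMDl // divn_small // addn0 modn_small //.
by rewrite digits4_modn modnMDl modn_small.
Qed.

Lemma base4_aux_fuel (f1 f2 N : nat) : (N <= f1)%N -> (N <= f2)%N ->
  base4_aux f1 N = base4_aux f2 N.
Proof.
elim: f1 f2 N => [|f1 IH] [|f2] [|N] //= N_le1 N_le2.
by rewrite (IH f2) //; lia.
Qed.

Lemma base4S (N : nat) : (0 < N)%N -> base4 N = rcons (base4 (N %/ 4)) (N %% 4)%N.
Proof.
case: N => [|N] // _; rewrite /base4 /=.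
by rewrite (@base4_aux_fuel N (N.+1 %/ 4)) //; lia.
Qed.

Lemma vH_gamma_word_digits4 (k N : nat) : (N < 4 ^ k)%N ->
  vH *m gamma_word (digits4 k N) = vH *m gamma_word (base4 N).
Proof.
elim: k N => [|k IH] N N_lt.
  by have -> : N = 0%N by move: N_lt; rewrite expn0; lia.
rewrite /= gamma_word_rcons mulmxA IH; last by rewrite ltn_divLR // -expnSr.
have [->|N_gt0] := posnP N; first by rewrite /= mulmx1 vH_gamma0.
by rewrite [base4 N]base4S // gamma_word_rcons mulmxA.
Qed.

Lemma gamma_word_digits4_wH (k N : nat) : (N < 4 ^ k)%N ->
  gamma_word (digits4 k N) *m wH = state_vec (scale k) (disp (take N (Aw k))).
Proof.
elim: k N => [|k IH] N N_lt.
  have -> : N = 0%N by move: N_lt; rewrite expn0; lia.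
  by rewrite mul1mx wH_state_vec /disp big_nil.
have pos4k : (0 < 4 ^ k)%N by rewrite expn_gt0.
have q_lt : (N %/ 4 ^ k < 4)%N by rewrite ltn_divLR // -expnS.
have r_lt := ltn_pmod N pos4k.
rewrite (divn_eq N (4 ^ k)) digits4_block // disp_take_AwS //.
by rewrite -gammaH_state_vec -IH // mulmxA.
Qed.

Lemma map_iota_take {T : Type} {x0 : T} {h : nat -> T} {w : seq T} {n : nat} :
  (forall i, (i < size w)%N -> h i = nth x0 w i) -> (n <= size w)%N ->
  [seq h i | i <- iota 0 n] = take n w.
Proof.
move=> h_w n_le; apply: (eq_from_nth (x0 := x0)) => [|i].
  by rewrite size_map size_iota size_take_min (minn_idPl n_le).
rewrite size_map size_iota => i_lt.
by rewrite (nth_map 0) ?size_iota // nth_iota // nth_take // h_w //; lia.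
Qed.

Theorem mainTheorem2 (h : nat -> dir)
  (hHC : forall (k i : nat), (i < size (Aw k))%N -> h i = nth U (Aw k) i)
  (n : nat) :
  coordmx (pos h n) = vH *m gamma_word (base4 n) *m wH.
Proof.
have n_lt : (n < 4 ^ n)%N by apply: ltn_expl.
rewrite pos_disp (map_iota_take (hHC n)); last by rewrite -ltnS size_Aw.
rewrite -(vH_gamma_word_digits4 n n n_lt) -mulmxA.
by rewrite gamma_word_digits4_wH // vH_state_vec.
Qed.
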